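(* Let $R$ and $S$ be commutative rings with identity, $f:R\to S$ a ring homomorphism, and $J$ a nonzero proper ideal of $S$. Suppose that $\operatorname{Spec}(S)\setminus V(J)$ is compactly packed. Then for any family $\{\mathfrak{q}_\delta\}_{\delta\in\Delta}$ of elements of $\operatorname{Spec}(S)\setminus V(J)$, the subset $\{\overline{\mathfrak{q}_\delta}^f\}_{\delta\in\Delta}$ of $\operatorname{Spec}(R\bowtie^f J)$ is compactly packed.
   Context: $R\bowtie^f J:=\{(r,f(r)+j)\mid r\in R,\ j\in J\}$, a subring of $R\times S$. $V(J)$ is the set of prime ideals of $S$ containing $J$. For a prime ideal $\mathfrak{q}$ of $S$ with $J\not\subseteq\mathfrak{q}$, $\overline{\mathfrak{q}}^f:=\{(r,f(r)+j)\mid r\in R,\ j\in J,\ f(r)+j\in\mathfrak{q}\}$, which is a prime ideal of $R\bowtie^f J$. For a commutative ring $A$, a subset $X\subseteq\operatorname{Spec}(A)$ is compactly packed if whenever an ideal $I$ of $A$ is contained in the union of a family $\{\mathfrak{p}_i\}_i$ of elements of $X$, then $I\subseteq\mathfrak{p}_i$ for some $i$. *)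

From mathcomp Require Import all_boot all_algebra.
Set Implicit Arguments. Unset Strict Implicit. Unset Printing Implicit Defensive.
Import GRing.Theory.
Local Open Scope ring_scope.

Definition is_ideal (S : comNzRingType) (I : S -> Prop) : Prop :=
  I 0 /\ (forall x y, I x -> I y -> I (x - y)) /\ (forall s x, I x -> I (s * x)).

Definition is_prime_ideal (S : comNzRingType) (q : S -> Prop) : Prop :=
  is_ideal q /\ ~ q 1 /\ (forall a b, q (a * b) -> q a \/ q b).

Definition amalg (R S : comNzRingType) (f : {rmorphism R -> S}) (J : S -> Prop)
  : R * S -> Prop :=
  fun p => exists r j, J j /\ p = (r, f r + j).

Definition is_sub_ideal (T : comNzRingType) (A : T -> Prop) (I : T -> Prop) : Prop :=
  (forall x, I x -> A x) /\ I 0 /\ (forall x y, I x -> I y -> I (x - y)) /\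
  (forall a x, A a -> I x -> I (a * x)).

Definition is_sub_prime (T : comNzRingType) (A : T -> Prop) (P : T -> Prop) : Prop :=
  is_sub_ideal A P /\ ~ P 1 /\
  (forall a b, A a -> A b -> P (a * b) -> P a \/ P b).

Definition compactly_packed_in (T : comNzRingType) (A : T -> Prop)
  (X : (T -> Prop) -> Prop) : Prop :=
  forall (I : T -> Prop), is_sub_ideal A I ->
  forall (Idx : Type) (P : Idx -> T -> Prop), (forall i, X (P i)) ->
  (forall x, I x -> exists i, P i x) -> exists i, forall x, I x -> P i x.

Definition compactly_packed (S : comNzRingType) (X : (S -> Prop) -> Prop) : Prop :=
  @compactly_packed_in S (fun _ => True) X.

Definition spec_minus_V (S : comNzRingType) (J : S -> Prop) : (S -> Prop) -> Prop :=
  fun q => is_prime_ideal q /\ ~ (forall x, J x -> q x).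

Definition qbar (R S : comNzRingType) (f : {rmorphism R -> S}) (J : S -> Prop)
  (q : S -> Prop) : R * S -> Prop :=
  fun p => exists r j, J j /\ q (f r + j) /\ p = (r, f r + j).

From mathcomp Require Import all_boot all_algebra.
From Stdlib Require Import Classical.

Set Implicit Arguments.
Unset Strict Implicit.
Local Open Scope ring_scope.
Import GRing.Theory.

(* An ideal I of R ⋈^f J that lies in the union of the qbar (q_d) determines
   the ideal K = {x ∈ S | (0, j x) ∈ I for all j ∈ J} of S.  For x ∈ K the
   ideal J x lies in the union of the q_d, hence (compact packing) in one q_d,
   and since q_d is prime and does not contain J, x ∈ q_d.  So K lies in the
   union of the q_d, hence in a single q_d.  Finally every (r, s) ∈ I has
   s ∈ K, because (0, j) (r, s) = (0, j s), so I ⊆ qbar (q_d). *)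

Lemma sub_ideal_full (S : comNzRingType) (I : S -> Prop) :
  is_ideal I -> is_sub_ideal (fun _ => True) I.
Proof. by move=> [I0 [IB IM]]; do !split=> //; move=> a x _; apply: IM. Qed.

Lemma prime_mem_of_mull (S : comNzRingType) (J q : S -> Prop) (x : S) :
  is_prime_ideal q -> ~ (forall j, J j -> q j) ->
  (forall j, J j -> q (j * x)) -> q x.
Proof.
move=> [_ [_ q_prime]] J_notin_q Jx_in_q.
have [j Nj] := not_all_ex_not _ _ J_notin_q.
have [Jj qNj] := imply_to_and _ _ Nj.
by case: (q_prime _ _ (Jx_in_q _ Jj)) => // /qNj.
Qed.

Section Amalgamation.

Variables (R S : comNzRingType) (f : {rmorphism R -> S}) (J : S -> Prop).
Hypothesis J_ideal : is_ideal J.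

Lemma is_ideal_mull (x : S) : is_ideal (fun y => exists2 j, J j & y = j * x).
Proof.
have [J0 [JB JM]] := J_ideal.
split; first by exists 0; rewrite ?mul0r.
split=> [_ _ [a Ja ->] [b Jb ->]|s _ [a Ja ->]].
- by exists (a - b); rewrite ?mulrBl //; apply: JB.
- by exists (s * a); rewrite ?mulrA //; apply: JM.
Qed.

Lemma spec_minus_V_mul_cover (D : Type) (Q : D -> S -> Prop) (x : S) :
  compactly_packed (spec_minus_V J) -> (forall d, spec_minus_V J (Q d)) ->
  (forall j, J j -> exists d, Q d (j * x)) -> exists d, Q d x.
Proof.
move=> Jcp QV Jx_cover.
have [|d Jx_in_Qd] := Jcp _ (sub_ideal_full (is_ideal_mull x)) D Q QV.
  by move=> _ [j Jj ->]; apply: Jx_cover.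
have [Qd_prime J_notin_Qd] := QV d.
exists d; apply: prime_mem_of_mull Qd_prime J_notin_Qd _ => j Jj.
by apply: Jx_in_Qd; exists j.
Qed.

Lemma amalg_zero (j : S) : J j -> amalg f J (0, j).
Proof. by move=> Jj; exists 0, j; rewrite rmorph0 add0r. Qed.

Lemma qbarE (q : S -> Prop) (p : R * S) :
  qbar f J q p <-> amalg f J p /\ q p.2.
Proof.
split=> [[r [j [Jj [qp ->]]]]|[[r [j [Jj Ep]]] qp]].
- by split=> //; exists r, j.
- by exists r, j; rewrite Ep in qp *.
Qed.

Definition snd_colon (I : R * S -> Prop) : S -> Prop :=
  fun x => forall j, J j -> I (0, j * x).

Variable I : R * S -> Prop.
Hypothesis I_ideal : is_sub_ideal (amalg f J) I.

Lemma is_ideal_snd_colon : is_ideal (snd_colon I).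
Proof.
have [_ [I0 [IB _]]] := I_ideal; have [_ [_ JM]] := J_ideal.
split; first by move=> j _; rewrite mulr0.
split=> [a b Ia Ib j Jj|s x Ix j Jj].
- have -> : (0, j * (a - b)) = (0, j * a) - (0, j * b) :> R * S.
    by rewrite mulrBr; congr pair; rewrite subr0.
  exact: IB (Ia j Jj) (Ib j Jj).
- by rewrite mulrA; apply: Ix; rewrite mulrC; apply: JM.
Qed.

Lemma snd_colon_snd (p : R * S) : I p -> snd_colon I p.2.
Proof.
move=> Ip j Jj; have [_ [_ [_ IM]]] := I_ideal.
have -> : (0, j * p.2) = (0, j) * p :> R * S.
  by case: p Ip => r s _; congr pair; rewrite mul0r.
exact: IM (amalg_zero Jj) Ip.
Qed.

Lemma sub_qbar_of_cover (D : Type) (Q : D -> S -> Prop) :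
  compactly_packed (spec_minus_V J) -> (forall d, spec_minus_V J (Q d)) ->
  (forall p, I p -> exists d, qbar f J (Q d) p) ->
  exists d, forall p, I p -> qbar f J (Q d) p.
Proof.
move=> Jcp QV I_cover.
have colon_cover x : snd_colon I x -> exists d, Q d x.
  move=> Ix; apply: spec_minus_V_mul_cover Jcp QV _ => j Jj.
  by have [d /qbarE [_ ?]] := I_cover _ (Ix j Jj); exists d.
have [d colon_in_Qd] :=
  Jcp _ (sub_ideal_full is_ideal_snd_colon) D Q QV colon_cover.
exists d => p Ip; apply/qbarE; split; first by case: I_ideal => IA _; apply: IA.
exact/colon_in_Qd/snd_colon_snd.
Qed.

End Amalgamation.

Theorem proposition4p5 (R S : comNzRingType) (f : {rmorphism R -> S})
  (J : S -> Prop) (HJ : is_ideal J) (HJ0 : exists x, J x /\ x != 0) (HJ1 : ~ J 1)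
  (Hcp : compactly_packed (spec_minus_V J))
  (Delta : Type) (q : Delta -> S -> Prop) (Hq : forall d, spec_minus_V J (q d)) :
  compactly_packed_in (amalg f J) (fun P => exists d, P = qbar f J (q d)).
Proof.
move=> I I_ideal Idx P P_qbar I_cover.
pose D := {d : Delta | exists i, P i = qbar f J (q d)}.
have [|[d [i Pi]] I_in_qd] :=
  sub_qbar_of_cover HJ I_ideal Hcp (fun d : D => Hq (sval d)).
  move=> p /I_cover [i Pip]; have [d Pi] := P_qbar i.
  by exists (exist _ d (ex_intro _ i Pi)); rewrite -Pi.
by exists i; rewrite Pi.
Qed.
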